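(* Let $f:[0,1]\to[0,1]$ be a surjective continuous function that does not admit a splitting sequence. If $f$ admits two 2-cycles $\{s,t\}$ and $\{u,v\}$ with $s<t$, $u<v$ and $s<u$, then there is exactly one component $C$ of $f^{-1}([s,u])$ such that $f(C)=[s,u]$, and there is exactly one component $C'$ of $f^{-1}([v,t])$ such that $f(C')=[v,t]$.
   Context: A 2-cycle is a set $\{s,t\}$ with $s\ne t$, $f(s)=t$, $f(t)=s$. A sequence $(T_n)_{n\in\mathbb N}$ of closed intervals $T_n\subsetneq[0,1]$ (possibly degenerate) is tight if $f(T_{n+1})=T_n$ for every $n$ and $T_n$ is nondegenerate for all sufficiently large $n$. A tight sequence $(T_n)$, $T_n=[l_n,r_n]$, is a splitting sequence admitted by $f$ if there are an infinite set $N\subseteq\mathbb N$ and nondegenerate closed intervals $S_n\subseteq[0,1]$ ($n\in N$) with $S_n\cap T_n\subseteq\{l_n,r_n\}$ and $f(S_n)=f(T_n)$ for all $n\in N$. *)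

From HB Require Import structures.
From mathcomp Require Import all_boot all_order all_algebra.
From mathcomp Require Import all_classical all_reals all_analysis.
Set Implicit Arguments. Unset Strict Implicit. Unset Printing Implicit Defensive.
Import Order.TTheory GRing.Theory Num.Theory.
Import numFieldNormedType.Exports.
Local Open Scope classical_set_scope.
Local Open Scope ring_scope.

Definition I01 {R : realType} : set R := `[0, 1]%classic.

Definition two_cycle {R : realType} (f : R -> R) (s t : R) : Prop :=
  I01 s /\ I01 t /\ s <> t /\ f s = t /\ f t = s.

Definition tight {R : realType} (f : R -> R) (l r : nat -> R) : Prop :=
  (forall n, l n <= r n /\ `[l n, r n]%classic `<=` I01 /\ `[l n, r n]%classic <> I01) /\
  (forall n, f @` `[l n.+1, r n.+1]%classic = `[l n, r n]%classic) /\
  (exists N, forall n, (N <= n)%N -> l n < r n).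

Definition splitting_seq {R : realType} (f : R -> R) (l r : nat -> R) : Prop :=
  tight f l r /\
  exists (N : set nat) (a b : nat -> R),
    infinite_set N /\
    forall n, N n ->
      [/\ a n < b n, `[a n, b n]%classic `<=` I01,
          `[a n, b n]%classic `&` `[l n, r n]%classic `<=` [set l n; r n]
        & f @` `[a n, b n]%classic = f @` `[l n, r n]%classic].

Definition admits_splitting_seq {R : realType} (f : R -> R) : Prop :=
  exists l r : nat -> R, splitting_seq f l r.

Definition component_of {R : realType} (A C : set R) : Prop :=
  exists2 x, A x & C = connected_component A x.

From mathcomp Require Import all_boot all_order all_algebra.
From mathcomp Require Import all_classical all_reals all_analysis.
Set Implicit Arguments. Unset Strict Implicit. Unset Printing Implicit Defensive.
Import Order.TTheory GRing.Theory Num.Theory.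
Import numFieldNormedType.Exports.
Local Open Scope classical_set_scope.
Local Open Scope ring_scope.

(* If [f] maps intervals [A] and [B] over each other, pulling [A] back
   alternately through [B] and [A] gives a tight sequence, since every
   subinterval of [f(J)] is the exact image of a subinterval of [J].  Its terms
   in [B] split as soon as a connected set meeting them at most in their
   endpoints also covers [A].  The two 2-cycles force [s < u < v < t]
   (otherwise the interval between the cycles splits such a sequence), so [f]
   maps [[s, u]] and [[v, t]] over each other.  Each term in [[v, t]] of the
   corresponding sequence lies in one component of [f^-1([s, u])]; a second
   component covering [[s, u]] would contain a disjoint interval with the same
   image, i.e. [f] would admit a splitting sequence. *)

Section continuous_images.
Variable R : realType.
Implicit Types (A C D : set R) (g : R -> R) (a b c d x y z : R).

Lemma closed_sup A : closed A -> A !=set0 -> has_ubound A -> A (sup A).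
Proof. by move=> cA A0 ubA; have := closure_sup A0 ubA; rewrite -(closure_id A).1. Qed.

Lemma closed_inf A : closed A -> A !=set0 -> has_lbound A -> A (inf A).
Proof.
move=> cA A0 lbA; have E : -%R @` A = -%R @^-1` A.
  apply/seteqP; split=> [_ [w Aw <-]|w Aw]; first by rewrite /= opprK.
  by exists (- w); rewrite ?opprK.
rewrite /inf E; apply: (@closed_sup (-%R @^-1` A)).
- by move: cA; apply: (continuous_closedP _).1; exact: opp_continuous.
- by case: A0 => w Aw; exists (- w); rewrite /= opprK.
- by rewrite -E -has_lb_ubN.
Qed.

Lemma closed_within_preimage A g D : closed A -> {within A, continuous g} ->
  closed D -> closed (A `&` g @^-1` D).
Proof.
move=> cA gc cD; rewrite setIC closed_setIS //.
exact: (continuous_closedP _).1 gc _ cD.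
Qed.

Lemma closed_level_itv g a b c : {within `[a, b], continuous g} ->
  closed (`[a, b] `&` g @^-1` [set c]).
Proof. by move=> gc; apply: closed_within_preimage => //; exact: interval_closed. Qed.

Lemma itv_sub_image g a b : a <= b -> {within `[a, b], continuous g} ->
  `[g a, g b] `<=` g @` `[a, b].
Proof.
move=> ab gc w /=; rewrite in_itv /= => /andP[aw wb].
have [|z zab <-] := @IVT _ g a b w ab gc; last by exists z.
by rewrite ge_min le_max aw wb !orbT.
Qed.

Lemma itv_sub_image_rev g a b : a <= b -> {within `[a, b], continuous g} ->
  `[g b, g a] `<=` g @` `[a, b].
Proof.
move=> ab gc w /=; rewrite in_itv /= => /andP[bw wa].
have [|z zab <-] := @IVT _ g a b w ab gc; last by exists z.
by rewrite ge_min le_max bw wa !orbT.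
Qed.

Lemma first_hit g x y d : x <= y -> {within `[x, y], continuous g} -> g y = d ->
  exists b, [/\ b \in `[x, y], g b = d & {in `[x, b[, forall z, g z != d}].
Proof.
move=> xy gc gy; set S := `[x, y] `&` g @^-1` [set d].
have Sy : S y by split => //=; rewrite in_itv /= xy lexx.
have lbS : has_lbound S by exists x => z [/=]; rewrite in_itv /= => /andP[].
have [Sb gb] : S (inf S) by apply: closed_inf; [exact: closed_level_itv | exists y |].
exists (inf S); split => // z; rewrite in_itv /= => /andP[xz zb]; apply/eqP => gz.
suff : inf S <= z by rewrite leNgt zb.
apply: inf_lbound => //; split => //=; rewrite in_itv /= xz.
by move: Sb => /=; rewrite in_itv /= => /andP[_]; exact: le_trans (ltW zb).
Qed.

Lemma last_hit g x y c : x <= y -> {within `[x, y], continuous g} -> g x = c ->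
  exists a, [/\ a \in `[x, y], g a = c & {in `]a, y], forall z, g z != c}].
Proof.
move=> xy gc gx; set S := `[x, y] `&` g @^-1` [set c].
have Sx : S x by split => //=; rewrite in_itv /= xy lexx.
have ubS : has_ubound S by exists y => z [/=]; rewrite in_itv /= => /andP[].
have [Sa ga] : S (sup S) by apply: closed_sup; [exact: closed_level_itv | exists x |].
exists (sup S); split => // z; rewrite in_itv /= => /andP[az zy]; apply/eqP => gz.
suff : z <= sup S by rewrite leNgt az.
apply: sup_ubound => //; split => //=; rewrite in_itv /= zy andbT.
by move: Sa => /=; rewrite in_itv /= => /andP[xa _]; exact: le_trans xa (ltW az).
Qed.

Lemma subset_itvcc a b c d : a <= c -> d <= b -> `[c, d]%classic `<=` `[a, b].
Proof. by move=> ac db; apply: subset_itv; rewrite bnd_simp. Qed.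

Lemma image_itv_between_hits g a b c d : a <= b -> {within `[a, b], continuous g} ->
  g a = c -> g b = d -> c <= d ->
  {in `]a, b], forall z, g z != c} -> {in `[a, b[, forall z, g z != d} ->
  g @` `[a, b]%classic = `[c, d]%classic.
Proof.
move=> ab gc ga gb cd avoid_c avoid_d; apply/seteqP; split; last first.
  by rewrite -ga -gb; exact: itv_sub_image.
move=> gz [z /=]; rewrite in_itv /= => /andP[az zb] <-; rewrite in_itv /=.
apply/andP; split; rewrite leNgt; apply/negP.
- move=> gzc; have gcz : {within `[z, b], continuous g}.
    by apply: continuous_subspaceW gc; exact: subset_itvcc.
  have [|w] := @IVT _ g z b c zb gcz.
    by rewrite ge_min le_max (ltW gzc) gb cd orbT.
  rewrite in_itv /= => /andP[zw wb] gw.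
  have az' : a < z.
    by rewrite lt_neqAle az andbT; apply: contraTneq gzc => <-; rewrite ga ltxx.
  by have := avoid_c w; rewrite in_itv /= (lt_le_trans az' zw) wb gw eqxx => /(_ isT).
- move=> dgz; have gcz : {within `[a, z], continuous g}.
    by apply: continuous_subspaceW gc; exact: subset_itvcc.
  have [|w] := @IVT _ g a z d az gcz.
    by rewrite ge_min le_max ga cd (ltW dgz) orbT.
  rewrite in_itv /= => /andP[aw wz] gw.
  have zb' : z < b.
    by rewrite lt_neqAle zb andbT; apply: contraTneq dgz => ->; rewrite gb ltxx.
  by have := avoid_d w; rewrite in_itv /= (le_lt_trans wz zb') aw gw eqxx => /(_ isT).
Qed.

(* [b] is the first time [g] reaches [d] and [a] the last time before [b] that
   [g] takes the value [c]; in between, [g] cannot leave [[c, d]]. *)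
Lemma exact_preimage_incr g x y c d : x <= y -> {within `[x, y], continuous g} ->
  g x = c -> g y = d -> c <= d ->
  exists a b, [/\ x <= a, a <= b, b <= y & g @` `[a, b]%classic = `[c, d]%classic].
Proof.
move=> xy gc gx gy cd.
have [b [+ gb avoid_d]] := first_hit xy gc gy; rewrite in_itv /= => /andP[xb by_].
have gcb : {within `[x, b], continuous g}.
  by apply: continuous_subspaceW gc; exact: subset_itvcc.
have [a [+ ga avoid_c]] := last_hit xb gcb gx; rewrite in_itv /= => /andP[xa ab].
exists a, b; split => //; apply: image_itv_between_hits => //.
- by apply: continuous_subspaceW gcb; exact: subset_itvcc.
- move=> z; rewrite in_itv /= => /andP[az zb].
  by apply: avoid_d; rewrite in_itv /= zb (le_trans xa az).
Qed.

Lemma image_opp_itv g A c d :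
  (fun z => - g z) @` A = `[- d, - c]%classic -> g @` A = `[c, d]%classic.
Proof.
move=> E; apply/seteqP; split => [_ [z Az <-]|w cdw].
  have : `[- d, - c]%classic (- g z) by rewrite -E; exists z.
  by rewrite /= oppr_itvcc !opprK.
have : `[- d, - c]%classic (- w) by rewrite /= oppr_itvcc !opprK.
by rewrite -E => -[z Az /oppr_inj <-]; exists z.
Qed.

Lemma connected_exact_preimage g C c d : connected C -> {within C, continuous g} ->
  c <= d -> `[c, d]%classic `<=` g @` C ->
  exists a b, [/\ a <= b, `[a, b]%classic `<=` C & g @` `[a, b]%classic = `[c, d]%classic].
Proof.
move=> Cconn gc cd cdC.
have [x Cx gx] : (g @` C) c by apply: cdC; rewrite /= in_itv /= lexx cd.
have [y Cy gy] : (g @` C) d by apply: cdC; rewrite /= in_itv /= lexx cd.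
have itvC p q : C p -> C q -> `[p, q]%classic `<=` C.
  by move=> Cp Cq; exact: (connected_intervalP C).1 Cconn p q Cp Cq.
have [xy|yx] := leP x y.
  have gcxy := continuous_subspaceW (itvC _ _ Cx Cy) gc.
  have [a [b [xa ab by_ E]]] := exact_preimage_incr xy gcxy gx gy cd.
  by exists a, b; split => //; apply: subset_trans (itvC _ _ Cx Cy); exact: subset_itvcc.
have ngc : {within `[y, x], continuous (fun z => - g z)}.
  by move=> z; apply/continuousN/(continuous_subspaceW (itvC _ _ Cy Cx) gc).
have [|a [b [ya ab bx E]]] := exact_preimage_incr (ltW yx) ngc (congr1 -%R gy) (congr1 -%R gx).
  by rewrite lerN2.
exists a, b; split => //; last exact: image_opp_itv.
by apply: subset_trans (itvC _ _ Cy Cx); exact: subset_itvcc.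
Qed.

Lemma nondegenerate_of_image g a b c d : a <= b -> c < d ->
  g @` `[a, b]%classic = `[c, d]%classic -> a < b.
Proof.
move=> ab cd E; rewrite lt_neqAle ab andbT; apply/eqP => eab; move: E; rewrite -eab.
rewrite set_itv1 image_set1 => E.
have : [set g a] c /\ [set g a] d by rewrite E /= !in_itv /= !lexx (ltW cd).
by move=> [/= <- dc]; rewrite dc ltxx in cd.
Qed.

End continuous_images.

Definition proper_itv {R : realType} (p q : R) : Prop :=
  [/\ p < q, `[p, q]%classic `<=` I01 & `[p, q]%classic <> I01].

Lemma I01_itv {R : realType} (p q : R) : I01 p -> I01 q -> `[p, q]%classic `<=` I01.
Proof. by rewrite /I01 /= !in_itv /= => /andP[p0 _] /andP[_ q1]; exact: subset_itvcc. Qed.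

Lemma continuous_within_itv {R : realType} (f : R -> R) (p q : R) :
  {within I01, continuous f} -> I01 p -> I01 q -> {within `[p, q], continuous f}.
Proof. by move=> fcont Ip Iq; exact: continuous_subspaceW (I01_itv Ip Iq) fcont. Qed.

Lemma proper_itv_of {R : realType} (p q w : R) : p < q -> I01 p -> I01 q -> I01 w ->
  (w < p) || (q < w) -> proper_itv p q.
Proof.
move=> pq Ip Iq Iw wpq; split => [//||E]; first exact: I01_itv.
move: Iw; rewrite -E /= in_itv /= => /andP[pw wq].
by move: wpq; rewrite ltNge pw /= ltNge wq.
Qed.

Definition splittable {R : realType} (f : R -> R) (l r : R) : Prop :=
  exists a b, [/\ a < b, `[a, b]%classic `<=` I01,
    `[a, b]%classic `&` `[l, r]%classic `<=` [set l; r]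
    & f @` `[a, b]%classic = f @` `[l, r]%classic].

Lemma infinite_odd : infinite_set [set n : nat | odd n].
Proof.
move=> fin; apply: infinite_nat.
have -> : [set: nat] = (fun k : nat => k.*2.+1) @^-1` [set n : nat | odd n].
  by apply/seteqP; split => k //= _; rewrite odd_double.
by apply: finite_preimage fin => i j _ _ /= [] /double_inj.
Qed.

Section splitting.
Variables (R : realType) (f : R -> R).
Hypothesis fcont : {within I01, continuous f}.
Implicit Types (p q l r c d : R).

Lemma splitting_seq_of (l r : nat -> R) (N : set nat) : tight f l r -> infinite_set N ->
  (forall n, N n -> splittable f (l n) (r n)) -> splitting_seq f l r.
Proof.
move=> tlr infN splitN; split => //.
have /choice[a /choice[b abP]] : forall n, exists a0 b0, N n ->
    [/\ a0 < b0, `[a0, b0]%classic `<=` I01,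
      `[a0, b0]%classic `&` `[l n, r n]%classic `<=` [set l n; r n]
      & f @` `[a0, b0]%classic = f @` `[l n, r n]%classic].
  move=> n; have [/splitN[a0 [b0 h]]|nN] := pselect (N n); first by exists a0, b0.
  by exists 0, 0 => /nN.
by exists N, a, b.
Qed.

Lemma pullback_chain (p q : nat -> R) : (forall n, p n <= q n) ->
  (forall n, `[p n, q n]%classic `<=` I01) ->
  (forall n, `[p n, q n]%classic `<=` f @` `[p n.+1, q n.+1]%classic) ->
  exists l r : nat -> R, [/\ l 0%N = p 0%N, r 0%N = q 0%N,
    forall n, l n <= r n /\ `[l n, r n]%classic `<=` `[p n, q n]%classic &
    forall n, f @` `[l n.+1, r n.+1]%classic = `[l n, r n]%classic].
Proof.
move=> pq pqI cover.
have /choice[step stepP] : forall x : nat * (R * R), exists ab : R * R,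
    x.2.1 <= x.2.2 -> `[x.2.1, x.2.2]%classic `<=` `[p x.1, q x.1]%classic ->
    [/\ ab.1 <= ab.2, `[ab.1, ab.2]%classic `<=` `[p x.1.+1, q x.1.+1]%classic
      & f @` `[ab.1, ab.2]%classic = `[x.2.1, x.2.2]%classic].
  move=> [n [c d]] /=.
  have [[cd cd_pq]|no_box] :=
    pselect (c <= d /\ `[c, d]%classic `<=` `[p n, q n]%classic); last first.
    by exists (0, 0) => ? ?; case: no_box.
  have gc := continuous_subspaceW (pqI n.+1) fcont.
  have [a [b [ab abpq E]]] := connected_exact_preimage (@segment_connected _ _ _) gc cd
    (subset_trans cd_pq (cover n)).
  by exists (a, b).
pose T := fix T n := if n is m.+1 then step (m, T m) else (p 0%N, q 0%N).
have T_box n : (T n).1 <= (T n).2 /\ `[(T n).1, (T n).2]%classic `<=` `[p n, q n]%classic.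
  elim: n => [|n [lt_n sub_n]]; first by split => //=.
  by have [] := stepP (n, T n) lt_n sub_n.
exists (fun n => (T n).1), (fun n => (T n).2); split => // n.
by have [lt_n sub_n] := T_box n; have [_ _] := stepP (n, T n) lt_n sub_n.
Qed.

Lemma loop_splitting pa qa pb qb : proper_itv pa qa -> proper_itv pb qb ->
  `[pb, qb]%classic `<=` f @` `[pa, qa]%classic ->
  `[pa, qa]%classic `<=` f @` `[pb, qb]%classic ->
  (forall l r c d, l < r -> `[l, r]%classic `<=` `[pb, qb]%classic ->
     c < d -> `[c, d]%classic `<=` `[pa, qa]%classic ->
     f @` `[l, r]%classic = `[c, d]%classic -> splittable f l r) ->
  admits_splitting_seq f.
Proof.
move=> [pqa Ia nIa] [pqb Ib nIb] BA AB splitB.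
pose p n := if odd n then pb else pa; pose q n := if odd n then qb else qa.
have p_le_q n : p n <= q n by rewrite /p /q; case: odd; apply: ltW.
have pqI n : `[p n, q n]%classic `<=` I01 by rewrite /p /q; case: odd.
have cover n : `[p n, q n]%classic `<=` f @` `[p n.+1, q n.+1]%classic.
  by rewrite /p /q /=; case: odd.
have [l [r [l0 r0 lr_box img]]] := pullback_chain p_le_q pqI cover.
have lt_lr n : l n < r n.
  elim: n => [|n IH]; first by rewrite l0 r0.
  exact: nondegenerate_of_image (lr_box n.+1).1 IH (img n).
have proper_lr n : `[l n, r n]%classic `<=` I01 /\ `[l n, r n]%classic <> I01.
  have [_ sub] := lr_box n; split; first exact: subset_trans (pqI n).
  move=> E; have : `[p n, q n]%classic = I01 by apply/seteqP; split; rewrite // -E.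
  by rewrite /p /q; case: odd.
exists l, r; apply: (splitting_seq_of _ infinite_odd).
  split=> [n|]; last by split=> //; exists 0%N.
  by have [] := proper_lr n; split => //; exact: ltW.
case=> // m /= even_m; apply: (splitB _ _ (l m) (r m)) => //.
- by have [_] := lr_box m.+1; rewrite /p /q /= even_m.
- by have [_] := lr_box m; rewrite /p /q /= (negbTE even_m).
Qed.

Lemma splittable_of_disjoint K l r c d : connected K -> K `<=` I01 ->
  c < d -> `[c, d]%classic `<=` f @` K -> f @` `[l, r]%classic = `[c, d]%classic ->
  K `&` `[l, r]%classic `<=` [set l; r] -> splittable f l r.
Proof.
move=> Kconn KI cd cdK Elr Klr.
have [a [b [ab abK E]]] :=
  connected_exact_preimage Kconn (continuous_subspaceW KI fcont) (ltW cd) cdK.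
exists a, b; split; first exact: nondegenerate_of_image ab cd E.
- exact: subset_trans KI.
- by move=> z [/abK Kz lrz]; exact: Klr.
- by rewrite E Elr.
Qed.

Lemma loop_splitting_by_itv pa qa pb qb pk qk : proper_itv pa qa -> proper_itv pb qb ->
  `[pb, qb]%classic `<=` f @` `[pa, qa]%classic ->
  `[pa, qa]%classic `<=` f @` `[pb, qb]%classic ->
  `[pk, qk]%classic `<=` I01 -> `[pa, qa]%classic `<=` f @` `[pk, qk]%classic ->
  `[pk, qk]%classic `&` `[pb, qb]%classic `<=` [set pb; qb] ->
  admits_splitting_seq f.
Proof.
move=> A_proper B_proper BA AB KI AK KB.
apply: loop_splitting A_proper B_proper BA AB _ => l r c d lr lrB cd cdA Elr.
apply: splittable_of_disjoint (@segment_connected _ pk qk) KI cd _ Elr _.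
  exact: subset_trans AK.
have /lrB : `[l, r]%classic l by rewrite /= in_itv /= lexx ltW.
have /lrB : `[l, r]%classic r by rewrite /= in_itv /= lexx ltW.
rewrite /= !in_itv /= => /andP[_ rqb] /andP[pbl _] z [Kz lrz].
have := lrz; rewrite /= in_itv /= => /andP[lz zr].
have [zpb|zqb] := KB z (conj Kz (lrB z lrz)).
  by left; apply/eqP; rewrite eq_le lz andbT zpb.
by right; apply/eqP; rewrite eq_le zr /= zqb.
Qed.

End splitting.

Lemma image_connected_component {R : realType} (g : R -> R) (A K D : set R) x :
  connected K -> K x -> K `<=` A -> g @` K = D -> g @` A `<=` D ->
  g @` connected_component A x = D.
Proof.
move=> Kconn Kx KA gK gA; apply/seteqP; split.
  by move=> _ [z /connected_component_sub Az <-]; apply: gA; exists z.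
rewrite -gK => _ [z Kz <-]; exists z => //.
exact: connected_component_max Kx KA Kconn z Kz.
Qed.

Section components.
Variables (R : realType) (f : R -> R) (p q m M : R).
Hypothesis fcont : {within I01, continuous f}.
Hypotheses (pq_proper : proper_itv p q) (mM_proper : proper_itv m M).
Hypotheses (mM_sub : `[m, M]%classic `<=` f @` `[p, q]%classic)
  (pq_sub : `[p, q]%classic `<=` f @` `[m, M]%classic).

Let A := I01 `&` f @^-1` `[p, q]%classic.

Lemma distinct_components_splitting C1 C2 : component_of A C1 -> component_of A C2 ->
  f @` C1 = `[p, q]%classic -> f @` C2 = `[p, q]%classic -> C1 <> C2 ->
  admits_splitting_seq f.
Proof.
move=> C1_comp C2_comp fC1 fC2 C12.
apply: (loop_splitting fcont pq_proper mM_proper mM_sub pq_sub).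
move=> l r c d lr lrB cd cdA Elr.
have [_ mMI _] := mM_proper.
have lrA : `[l, r]%classic `<=` A.
  move=> z lrz; split; first exact/mMI/lrB.
  by apply: cdA; rewrite -Elr; exists z.
pose D := connected_component A l.
have lrD : `[l, r]%classic `<=` D.
  apply: connected_component_max lrA (@segment_connected _ l r).
  by rewrite /= in_itv /= lexx ltW.
have [E [[x Ax ->] fE ED]] :
    exists E, [/\ component_of A E, f @` E = `[p, q]%classic & E <> D].
  have [C1D|] := pselect (C1 = D); last by exists C1.
  by exists C2; split => // C2D; apply: C12; rewrite C1D C2D.
have EI : connected_component A x `<=` I01 by move=> z /connected_component_sub [].
have cdE : `[c, d]%classic `<=` f @` connected_component A x by rewrite fE.
apply: (splittable_of_disjoint fcont (@component_connected _ A x) EI cd cdE Elr).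
move=> z [Ez lrz]; exfalso; apply: ED.
by rewrite (same_connected_component Ez) /D (same_connected_component (lrD z lrz)).
Qed.

Lemma unique_component_onto : ~ admits_splitting_seq f ->
  exists! C, component_of A C /\ f @` C = `[p, q]%classic.
Proof.
move=> nosplit; have [pq _ _] := pq_proper; have [_ mMI _] := mM_proper.
have [a [b [ab abmM E]]] := connected_exact_preimage (@segment_connected _ m M)
  (continuous_subspaceW mMI fcont) (ltW pq) pq_sub.
have abA : `[a, b]%classic `<=` A.
  move=> z abz; split; first exact/mMI/abmM.
  by suff : `[p, q]%classic (f z) by []; rewrite -E; exists z.
have aab : `[a, b]%classic a by rewrite /= in_itv /= lexx ab.
have Ca_comp : component_of A (connected_component A a) by exists a => //; exact: abA.
have fCa : f @` connected_component A a = `[p, q]%classic.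
  apply: image_connected_component (@segment_connected _ a b) aab abA E _.
  by move=> _ [z [_ pqfz] <-].
exists (connected_component A a); split => // C [C_comp fC].
apply: contrapT => neq; apply: nosplit.
exact: distinct_components_splitting Ca_comp C_comp fCa fC neq.
Qed.

End components.

Lemma two_cycles_ordered (R : realType) (f : R -> R) (s t u v : R) :
  {within I01, continuous f} -> ~ admits_splitting_seq f ->
  two_cycle f s t -> two_cycle f u v -> s < t -> u < v -> s < u -> v < t.
Proof.
move=> fcont nosplit [Is [It [_ [fs ft]]]] [Iu [Iv [_ [fu fv]]]] st uv su.
have cont a b : I01 a -> I01 b -> {within `[a, b], continuous f}.
  exact: continuous_within_itv.
have tv : t != v by apply: contraTneq su => tv; rewrite -ft tv fv ltxx.
have tu : t != u by apply: contraTneq (lt_trans su uv) => tu; rewrite -ft tu fu ltxx.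
rewrite lt_neqAle eq_sym tv leNgt /=; apply/negP => tv_lt; apply: nosplit.
have [tu_lt|ut_lt|tu_eq] := ltgtP t u; last by rewrite tu_eq eqxx in tu.
- have st_proper : proper_itv s t by apply: (proper_itv_of st Is It Iu); rewrite tu_lt orbT.
  have st_self : `[s, t]%classic `<=` f @` `[s, t]%classic.
    by rewrite -{1}ft -{2}fs; exact: itv_sub_image_rev (ltW st) (cont _ _ Is It).
  apply: (loop_splitting_by_itv fcont st_proper st_proper st_self st_self (I01_itv It Iu)).
    apply: subset_trans (itv_sub_image (ltW tu_lt) (cont _ _ It Iu)).
    by rewrite ft fu; apply: subset_itvcc => //; exact: ltW.
  move=> z [] /=; rewrite !in_itv /= => /andP[tz _] /andP[_ zt]; right.
  by apply/eqP; rewrite eq_le zt tz.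
- have su_proper : proper_itv s u by apply: (proper_itv_of su Is Iu It); rewrite ut_lt orbT.
  have tv_proper : proper_itv t v by apply: (proper_itv_of tv_lt It Iv Is); rewrite st.
  have tv_su : `[t, v]%classic `<=` f @` `[s, u]%classic.
    by rewrite -{1}fs -{1}fu; exact: itv_sub_image (ltW su) (cont _ _ Is Iu).
  have su_tv : `[s, u]%classic `<=` f @` `[t, v]%classic.
    by rewrite -{1}ft -{1}fv; exact: itv_sub_image (ltW tv_lt) (cont _ _ It Iv).
  apply: (loop_splitting_by_itv fcont su_proper tv_proper tv_su su_tv (I01_itv Iu It)).
    apply: subset_trans (itv_sub_image_rev (ltW ut_lt) (cont _ _ Iu It)).
    by rewrite ft fu; apply: subset_itvcc => //; exact: ltW.
  move=> z [] /=; rewrite !in_itv /= => /andP[_ zt] /andP[tz _]; left.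
  by apply/eqP; rewrite eq_le zt tz.
Qed.

Theorem lemma3p14 (R : realType) (f : R -> R)
  (fcont : {within I01, continuous f})
  (fsurj : f @` I01 = I01)
  (nosplit : ~ admits_splitting_seq f)
  (s t u v : R)
  (cst : two_cycle f s t) (cuv : two_cycle f u v)
  (hst : s < t) (huv : u < v) (hsu : s < u) :
  (exists! C, component_of (I01 `&` f @^-1` `[s, u]%classic) C /\ f @` C = `[s, u]%classic) /\
  (exists! C', component_of (I01 `&` f @^-1` `[v, t]%classic) C' /\ f @` C' = `[v, t]%classic).
Proof.
have vt := two_cycles_ordered fcont nosplit cst cuv hst huv hsu.
have [[Is [It [_ [fs ft]]]] [Iu [Iv [_ [fu fv]]]]] := (cst, cuv).
have su_proper : proper_itv s u.
  by apply: (proper_itv_of hsu Is Iu It); rewrite (lt_trans huv vt) orbT.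
have vt_proper : proper_itv v t.
  by apply: (proper_itv_of vt Iv It Is); rewrite (lt_trans hsu huv).
have vt_su : `[v, t]%classic `<=` f @` `[s, u]%classic.
  rewrite -{1}fu -{1}fs; apply: itv_sub_image_rev (ltW hsu) _.
  exact: continuous_within_itv.
have su_vt : `[s, u]%classic `<=` f @` `[v, t]%classic.
  rewrite -{1}ft -{1}fv; apply: itv_sub_image_rev (ltW vt) _.
  exact: continuous_within_itv.
split; [exact: unique_component_onto fcont su_proper vt_proper vt_su su_vt nosplit
      | exact: unique_component_onto fcont vt_proper su_proper su_vt vt_su nosplit].
Qed.
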